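(* Let $G$ be a finite group and $K\trianglelefteq G$ a normal subgroup such that $\eta_g(K)=K$ for some $g\in G$. Then $K$ is inducible.
   Context: Commutators: $[x,y]=x^{-1}y^{-1}xy$, $x^y=y^{-1}xy$; for subsets $X,Y\subseteq G$, $[X,Y]$ is the subgroup generated by all $[x,y]$, and $[X,{}_kY]$ is the iterated commutator $[\cdots[[X,Y],Y]\cdots,Y]$ with $k$ copies of $Y$. $g^G=\{g^x:x\in G\}$. Fix $M\in\mathbb{N}$ with $[X,{}_MY]=[X,{}_iY]$ for all $i\ge M$ and all $X,Y\subseteq G$ with $X^G=X$, $Y^G=Y$; $\eta_g(K)=[K,{}_M\,g^G]$. An expression over $G$ is a word over $G\cup\mathcal{X}\cup\mathcal{X}^{-1}$ ($\mathcal{X}$ variables, $\mathcal{X}^{-1}$ formal inverses), evaluated under assignments $\sigma:\mathcal{X}\to G$ (with $\sigma(X^{-1})=\sigma(X)^{-1}$, $\sigma(g)=g$). A subset $S\subseteq G$ is inducible if there is an expression $\alpha$ with $S=\{\sigma(\alpha):\sigma:\mathcal{X}\to G\}$. *)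

From mathcomp Require Import all_boot all_fingroup.
Set Implicit Arguments. Unset Strict Implicit. Unset Printing Implicit Defensive.
Import GroupScope.
Open Scope group_scope.

(* Iterated commutator [X, _k Y] = [...[[X,Y],Y]...,Y] (k copies of Y);
   [X,Y] is the subgroup generated by all [x,y] (MathComp's [~: X, Y]),
   and [x,y] = x^-1 y^-1 x y (MathComp's [~ x, y]). *)
Definition itcomm (gT : finGroupType) (X Y : {set gT}) (k : nat) : {set gT} :=
  iter k (fun Z => [~: Z, Y]) X.

Definition normal_subset (gT : finGroupType) (X : {set gT}) : Prop :=
  [set x ^ y | x in X, y in [set: gT]] = X.

Definition stab_index (gT : finGroupType) (M : nat) : Prop :=
  forall (X Y : {set gT}), normal_subset X -> normal_subset Y ->
    forall i, M <= i -> itcomm X Y M = itcomm X Y i.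

Definition eta (gT : finGroupType) (M : nat) (g : gT) (K : {set gT}) : {set gT} :=
  itcomm K (g ^: [set: gT]) M.

(* Expressions: words over G ∪ 𝒳 ∪ 𝒳^{-1}, variables indexed by nat. *)
Inductive letter (gT : finGroupType) : Type :=
  | LConst of gT
  | LVar of nat
  | LInvVar of nat.

Definition expression (gT : finGroupType) := seq (letter gT).

Definition eval_letter (gT : finGroupType) (s : nat -> gT) (l : letter gT) : gT :=
  match l with
  | LConst g => g
  | LVar n => s n
  | LInvVar n => (s n)^-1
  end.

Definition eval_expr (gT : finGroupType) (s : nat -> gT) (a : expression gT) : gT :=
  foldr (fun l acc => eval_letter s l * acc) 1 a.

Definition inducible (gT : finGroupType) (S : {set gT}) : Prop :=
  exists a : expression gT, forall x : gT, x \in S <-> exists s : nat -> gT, eval_expr s a = x.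

(* Since the iterated commutators have stabilised, eta_g(K) = K gives
   K = [K, g^G] <= [K, G] <= K, so K is generated by the commutators [c, x]
   with c in K.  Each set {[c, x] : x in G} is inducible (by c^-1 X^-1 c X)
   and contains 1, and inducible sets are closed under products (rename the
   variables of the two factors apart).  Hence B = prod_(c in K) {[c, x] : x}
   is an inducible subset of K containing 1 and all generators of K; as G is
   finite, K = <B> = B^n for some n, and B^n is inducible. *)
From mathcomp Require Import all_boot all_fingroup.
From mathcomp Require Import commutator.
Set Implicit Arguments.
Unset Strict Implicit.
Unset Printing Implicit Defensive.
Open Scope group_scope.

Section Inducible.
Variable gT : finGroupType.
Implicit Types (A B : {set gT}) (a b : expression gT) (s : nat -> gT).

Definition rename_letter (f : nat -> nat) (l : letter gT) : letter gT :=
  match l with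
  | LConst c => LConst c
  | LVar n => LVar gT (f n)
  | LInvVar n => LInvVar gT (f n)
  end.

Definition rename_expr (f : nat -> nat) a : expression gT :=
  map (rename_letter f) a.

Lemma eval_cat s a b : eval_expr s (a ++ b) = eval_expr s a * eval_expr s b.
Proof. by elim: a => [|l a IHa] /=; rewrite ?mul1g // -mulgA -IHa. Qed.

Lemma eq_eval_expr s1 s2 a : s1 =1 s2 -> eval_expr s1 a = eval_expr s2 a.
Proof. by move=> eq_s; elim: a => [|[c|n|n] a /= ->] //=; rewrite eq_s. Qed.

Lemma eval_rename s f a :
  eval_expr s (rename_expr f a) = eval_expr (s \o f) a.
Proof. by elim: a => [|[c|n|n] a /= ->]. Qed.

Lemma inducible_set1 : inducible [set 1 : gT].
Proof.
exists [::] => x; rewrite inE; split=> [/eqP ->|[_ <-]] //.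
by exists (fun=> 1).
Qed.

Lemma inducible_mul A B : inducible A -> inducible B -> inducible (A * B).
Proof.
move=> [a defA] [b defB].
exists (rename_expr double a ++ rename_expr (fun n => n.*2.+1) b) => x.
split=> [/mulsgP[y z /defA[sA <-] /defB[sB <-] ->] | [s <-]].
  pose s n := if odd n then sB n./2 else sA n./2.
  exists s; rewrite eval_cat !eval_rename.
  congr (_ * _); apply: eq_eval_expr => n /=.
    by rewrite /s odd_double doubleK.
  by rewrite /s /= odd_double /= uphalf_double.
rewrite eval_cat !eval_rename; apply: mem_mulg.
  by apply/defA; exists (s \o double).
by apply/defB; exists (s \o (fun n => n.*2.+1)).
Qed.

Lemma inducible_expg A n : inducible A -> inducible (A ^+ n).
Proof.
move=> indA; elim: n => [|n IHn]; last by rewrite expgS; exact: inducible_mul.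
by rewrite expg0 set1gE; exact: inducible_set1.
Qed.

Lemma inducible_prod (I : Type) (r : seq I) (F : I -> {set gT}) :
  (forall i, inducible (F i)) -> inducible (\prod_(i <- r) F i).
Proof.
move=> indF; elim/big_ind: _ => // [|A B]; last exact: inducible_mul.
by rewrite set1gE; exact: inducible_set1.
Qed.

Definition commg_expr c : expression gT :=
  [:: LConst c^-1; LInvVar gT 0; LConst c; LVar gT 0].

Lemma eval_commg_expr s c : eval_expr s (commg_expr c) = [~ c, s 0%N].
Proof. by rewrite /eval_expr /= mulg1 commgEl /conjg !mulgA. Qed.

Lemma inducible_commg_class c : inducible [set [~ c, x] | x : gT].
Proof.
exists (commg_expr c) => y.
split=> [/imsetP[x _ ->] | [s <-]]; last by rewrite eval_commg_expr imset_f.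
by exists (fun=> x); rewrite eval_commg_expr.
Qed.

Lemma mem1_prodg (I : Type) (r : seq I) (F : I -> {set gT}) :
  (forall j, 1 \in F j) -> 1 \in \prod_(j <- r) F j.
Proof. by move=> F1; elim/big_ind: _ => // A B A1 B1; rewrite -[1]mulg1 mem_mulg. Qed.

Lemma sub_prodg (I : eqType) (r : seq I) (F : I -> {set gT}) i :
  (forall j, 1 \in F j) -> i \in r -> F i \subset \prod_(j <- r) F j.
Proof.
move=> F1; elim: r => [|j r IHr] //; rewrite inE big_cons => /predU1P[-> | ri].
  exact/mulg_subl/mem1_prodg.
exact: subset_trans (IHr ri) (mulg_subr _ (F1 j)).
Qed.

Lemma normal_subset_norm A :
  [set: gT] \subset 'N(A) -> normal_subset A.
Proof.
move=> nAT; apply/eqP; rewrite eqEsubset (sub_class_support [set: gT]%G) andbT.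
by apply/subsetP=> _ /imset2P[x y Ax Ty ->]; rewrite memJ_norm // (subsetP nAT).
Qed.

Lemma eta_fixed_commg (M : nat) (K : {set gT}) (g : gT) :
  stab_index gT M -> [set: gT] \subset 'N(K) -> eta M g K = K ->
  K = [~: K, g ^: [set: gT]].
Proof.
move=> stabM nKT etaK.
have nsY := normal_subset_norm (class_norm g [set: gT]%G).
have := stabM _ _ (normal_subset_norm nKT) nsY _ (leqnSn M).
by rewrite /itcomm iterS -/(itcomm K _ M) -/(eta M g K) etaK.
Qed.

Lemma inducible_normal_commg (K : {group gT}) :
  [set: gT] \subset 'N(K) -> K \subset [~: K, [set: gT]] -> inducible K.
Proof.
move=> nKT sKR.
pose C c := [set [~ c, x] | x : gT].
pose B := \prod_(c <- enum K) C c.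
have C1 c : 1 \in C c by apply/imsetP; exists 1; rewrite ?commg1.
have B1 : 1 \in B := mem1_prodg _ C1.
have sRK : [~: K, [set: gT]] \subset K by rewrite commg_subl.
have sBK : B \subset K.
  rewrite /B big_seq; elim/big_ind: _ => [|A A' sAK sA'K|c].
  - exact: sub1G.
  - exact: mul_subG.
  - rewrite mem_enum => Kc; apply/subsetP=> _ /imsetP[x _ ->].
    by apply: (subsetP sRK); rewrite mem_commg ?inE.
have genB : <<B>> = K.
  apply/eqP; rewrite eqEsubset gen_subG sBK (subset_trans sKR) // genS //.
  apply/subsetP=> _ /imset2P[c x Kc _ ->].
  have /subsetP sCB : C c \subset B by rewrite sub_prodg ?mem_enum.
  by rewrite sCB ?imset_f.
have [n defB] := gen_expgs B.
rewrite -genB defB (setUidPr _) ?sub1set //.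
exact/inducible_expg/inducible_prod/inducible_commg_class.
Qed.

End Inducible.

Theorem lemma4p2 (gT : finGroupType) (M : nat) (K : {group gT}) (g : gT) :
  stab_index gT M ->
  K <| [set: gT] ->
  eta M g K = K ->
  inducible K.
Proof.
move=> stabM /andP[_ nKT] etaK.
apply: (inducible_normal_commg nKT).
by rewrite {1}(eta_fixed_commg stabM nKT etaK) commgS ?subsetT.
Qed.
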